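(* Let $j,s,d,t$ be positive integers with $s>dt$, $q$ a prime power, $\mathcal{C}\subseteq\mathbb{F}_q^{js}$ a linear code of dimension $j(s-dt)$, and $\mathcal{L}:[js]\to[s]$ a labeling with $\Delta_{\mathcal{L}}(\mathcal{C})\ge dt+1$. Let $G\in\mathbb{F}_q^{j(s-dt)\times js}$ be any generator matrix of $\mathcal{C}$, and for $\Lambda\subseteq[s]$ let $G(\Lambda)$ be the submatrix of $G$ consisting of the columns $i\in[js]$ with $\mathcal{L}(i)\in\Lambda$. Then for every $\Lambda\subseteq[s]$ with $|\Lambda|=s-dt$, $G(\Lambda)$ is a square $j(s-dt)\times j(s-dt)$ matrix and $\det G(\Lambda)\neq0$.
   Context: A labeling is a surjection $\mathcal{L}:[n]\to[s]$. Labelweight: for $\mathbf{c}\in\mathbb{F}^n$, $\Delta_{\mathcal{L}}(\mathbf{c})=|\{\mathcal{L}(i): c_i\neq0\}|$; for a code $\mathcal{C}$, $\Delta_{\mathcal{L}}(\mathcal{C})=\min_{\mathbf{0}\ne\mathbf{c}\in\mathcal{C}}\Delta_{\mathcal{L}}(\mathbf{c})$. A generator matrix of $\mathcal{C}$ is a matrix whose row span is $\mathcal{C}$ and whose number of rows equals $\dim\mathcal{C}$. *)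

From HB Require Import structures.
From mathcomp Require Import all_boot all_order all_algebra all_field.
Set Implicit Arguments. Unset Strict Implicit. Unset Printing Implicit Defensive.
Import GRing.Theory.
Local Open Scope ring_scope.

Definition labeling (n s : nat) (L : 'I_n -> 'I_s) : Prop :=
  forall y : 'I_s, exists x : 'I_n, L x = y.

Definition labelweight (F : fieldType) (n s : nat) (L : 'I_n -> 'I_s)
  (c : 'rV[F]_n) : nat :=
  #|[set L i | i in [set i : 'I_n | c 0 i != 0]]|.

Definition labelcols (n s : nat) (L : 'I_n -> 'I_s) (Lam : {set 'I_s}) :
  {set 'I_n} := [set i : 'I_n | L i \in Lam].

Definition subcols (F : fieldType) (m n s : nat) (L : 'I_n -> 'I_s)
  (G : 'M[F]_(m, n)) (Lam : {set 'I_s}) : 'M[F]_(m, #|labelcols L Lam|) :=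
  colsub (fun k : 'I_#|labelcols L Lam| => enum_val k) G.

From HB Require Import structures.
From mathcomp Require Import all_boot all_order all_algebra all_field.
From mathcomp Require Import zify.
Import GRing.Theory.
Set Implicit Arguments. Unset Strict Implicit.

(* Every generator-matrix submatrix [G(A)] with [#|A| = s - dt] is row-free:
   a codeword vanishing on the columns labelled in [A] has labelweight at most
   [#|~: A| = dt].  Hence every such [A] labels at least [j(s - dt)] columns,
   while all [s] labels together label [js] columns.  An extremal argument on a
   label set of minimal column count then shows that every label is carried by
   exactly [j] columns, so [G(Lam)] is square and, being row-free, invertible. *)

Section SubsetSums.
Variables (T : finType) (f : T -> nat).

Lemma sum_ge_const_eq (A : {set T}) c :
  {in A, forall x, f x <= c} -> c * #|A| <= \sum_(x in A) f x ->
  {in A, forall x, f x = c}.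
Proof.
move=> fA sumA x xA; apply/eqP; rewrite eqn_leq fA //= leqNgt; apply/negP => fx.
suff : \sum_(y in A) f y < \sum_(y in A) c by rewrite sum_nat_const; lia.
rewrite (bigD1 x) // [X in _ < X](bigD1 x) //= -addSn leq_add //.
by apply: leq_sum => y /andP[yA _]; apply: fA.
Qed.

Lemma sum_le_const_eq (A : {set T}) c :
  {in A, forall x, c <= f x} -> \sum_(x in A) f x <= c * #|A| ->
  {in A, forall x, f x = c}.
Proof.
move=> fA sumA x xA; apply/eqP; rewrite eqn_leq fA // andbT leqNgt; apply/negP => fx.
suff : \sum_(y in A) c < \sum_(y in A) f y by rewrite sum_nat_const; lia.
rewrite (bigD1 x) // [X in _ < X](bigD1 x) //= -addSn leq_add //.
by apply: leq_sum => y /andP[yA _]; apply: fA.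
Qed.

Lemma min_subset_sum_swap (A0 : {set T}) :
  (forall B : {set T}, #|B| = #|A0| -> \sum_(x in A0) f x <= \sum_(x in B) f x) ->
  forall l l', l \in A0 -> l' \notin A0 -> f l <= f l'.
Proof.
move=> A0min l l' lA0 l'A0.
have l'D : l' \notin A0 :\ l by rewrite in_setD1 (negbTE l'A0) andbF.
have cardB : #|l' |: (A0 :\ l)| = #|A0|.
  by rewrite cardsU1 l'D (cardsD1 l A0) lA0.
by have := A0min _ cardB; rewrite (big_setD1 l lA0) big_setU1 //= leq_add2r.
Qed.

Lemma exists_card_set k : k <= #|T| -> exists A : {set T}, #|A| = k.
Proof.
move=> /card_geqP[r [r_uniq r_size _]].
by exists [set x in r]; rewrite cardsE (card_uniqP r_uniq).
Qed.

(* On a k-subset [A0] of minimal sum every value is at most every value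
   outside [A0]; so values outside are at least the average [c] of [A0], hence
   equal to [c] by the total, and then so are the values inside [A0]. *)
Lemma const_of_subset_sums k c :
  0 < k -> k < #|T| ->
  (forall A : {set T}, #|A| = k -> c * k <= \sum_(x in A) f x) ->
  \sum_x f x = c * #|T| -> forall x, f x = c.
Proof.
move=> k_gt0 k_lt sumA sumT.
have [A1 cardA1] := exists_card_set (ltnW k_lt).
case: (@arg_minnP _ A1 (fun A : {set T} => #|A| == k) (fun A => \sum_(x in A) f x)).
  by rewrite cardA1.
move=> A0 /eqP cardA0 A0min.
have swap : forall l l', l \in A0 -> l' \notin A0 -> f l <= f l'.
  by apply: min_subset_sum_swap => B; rewrite cardA0 => /eqP; apply: A0min.
have cardC : #|~: A0| = #|T| - k by rewrite cardsCs setCK cardA0.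
have sum_split : \sum_x f x = \sum_(x in A0) f x + \sum_(x in ~: A0) f x.
  by rewrite (bigID (mem A0)) /=; congr (_ + _); apply: eq_bigl => x; rewrite inE.
have geC : {in ~: A0, forall l', c <= f l'}.
  move=> l'; rewrite inE => l'A0.
  have : \sum_(l in A0) f l <= \sum_(l in A0) f l' by apply: leq_sum => l /swap; apply.
  rewrite sum_nat_const cardA0 => le_sum.
  by rewrite -(leq_pmul2l k_gt0) mulnC (leq_trans (sumA _ cardA0)) // mulnC.
have eqC : {in ~: A0, forall x, f x = c}.
  apply: sum_le_const_eq => //; rewrite cardC.
  have := sumA _ cardA0; rewrite mulnBr; lia.
have [l0 l0C] : exists l0, l0 \in ~: A0 by apply/card_gt0P; rewrite cardC subn_gt0.
have eqA : {in A0, forall x, f x = c}.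
  apply: sum_ge_const_eq; last by rewrite cardA0 sumA.
  move=> l lA0; rewrite -(eqC l0 l0C); apply: swap => //.
  by rewrite inE in l0C.
by move=> x; case: (boolP (x \in A0)) => [/eqA | xA0]; last by apply: eqC; rewrite inE.
Qed.

End SubsetSums.

Local Open Scope ring_scope.

Lemma row_free_free_rows (F : fieldType) m n (G : 'M[F]_(m, n)) :
  free [seq row i G | i <- enum 'I_m] -> row_free G.
Proof.
move=> G_free; apply: inj_row_free => x xG0; apply/rowP => i; rewrite mxE.
have /freeP : free [tuple row i G | i < m] by [].
apply; rewrite -[RHS]xG0 mulmx_sum_row; apply: eq_bigr => l _.
by rewrite -tnth_nth tnth_mktuple.
Qed.

Lemma mulmx_memv_span_rows (F : fieldType) m n (G : 'M[F]_(m, n)) (x : 'rV_m) :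
  x *m G \in <<[seq row i G | i <- enum 'I_m]>>%VS.
Proof.
rewrite mulmx_sum_row; apply: rpred_sum => i _; apply/rpredZ/memv_span.
exact/map_f/mem_enum.
Qed.

Lemma row_free_castmx_det (F : fieldType) m n (M : 'M[F]_(m, n)) (e : n = m) :
  row_free M -> \det (castmx (erefl, e) M) != 0.
Proof. by case: _ / e in M *; rewrite castmx_id -unitfE -unitmxE -row_free_unit. Qed.

Section Labelings.
Variables (n s : nat) (L : 'I_n -> 'I_s).

Lemma card_labelcols (A : {set 'I_s}) :
  #|labelcols L A| = (\sum_(l in A) #|labelcols L [set l]|)%N.
Proof.
rewrite -sum1_card (partition_big L (mem A)) /=; last by move=> i; rewrite inE.
apply: eq_bigr => l lA; rewrite -sum1_card; apply: eq_bigl => i; rewrite !inE.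
by case: eqP => [->|]; rewrite ?lA ?andbF ?andbT.
Qed.

Lemma labelweight_le_compl (F : fieldType) (c : 'rV[F]_n) (A : {set 'I_s}) :
  (forall i, L i \in A -> c 0 i = 0) -> (labelweight L c <= #|~: A|)%N.
Proof.
move=> c_offA; apply/subset_leq_card/subsetP => l /imsetP[i].
rewrite !inE => ci_neq0 ->; apply: contra ci_neq0 => /c_offA ->; exact: eqxx.
Qed.

Lemma mulmx_subcols_eq0 (F : fieldType) m (G : 'M[F]_(m, n)) (A : {set 'I_s})
    (x : 'rV_m) :
  x *m subcols L G A = 0 -> forall i, L i \in A -> (x *m G) 0 i = 0.
Proof.
move=> xGA0 i LiA; have iA : i \in labelcols L A by rewrite inE.
move/rowP/(_ (enum_rank_in iA i)): xGA0.
by rewrite /subcols mulmx_colsub !mxE enum_rankK_in.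
Qed.

Lemma row_free_subcols (F : fieldType) m (G : 'M[F]_(m, n)) (A : {set 'I_s}) :
  row_free G ->
  (forall x : 'rV_m, x *m G != 0 -> (#|~: A| < labelweight L (x *m G))%N) ->
  row_free (subcols L G A).
Proof.
move=> G_free weight_gt; apply: inj_row_free => x xGA0.
apply: (row_free_inj G_free); rewrite mul0mx /=; apply/eqP; apply: contraT => xG_neq0.
have := weight_gt x xG_neq0.
by rewrite ltnNge (labelweight_le_compl (mulmx_subcols_eq0 xGA0)).
Qed.

End Labelings.

Theorem mainTheorem5 (F : finFieldType) (j s d t : nat)
  (hj : (0 < j)%N) (hs : (0 < s)%N) (hd : (0 < d)%N) (ht : (0 < t)%N)
  (hsdt : (d * t < s)%N)
  (C : {vspace 'rV[F]_(j * s)}) (hdimC : \dim C = (j * (s - d * t))%N)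
  (L : 'I_(j * s) -> 'I_s) (hL : labeling L)
  (hLw : forall c : 'rV[F]_(j * s), c \in C -> c != 0 ->
           (d * t + 1 <= labelweight L c)%N)
  (G : 'M[F]_(j * (s - d * t), j * s))
  (hG : <<[seq row i G | i <- enum 'I_(j * (s - d * t))]>>%VS = C) :
  forall Lam : {set 'I_s}, #|Lam| = (s - d * t)%N ->
    exists e : #|labelcols L Lam| = (j * (s - d * t))%N,
      \det (castmx (erefl, e) (subcols L G Lam)) != 0.
Proof.
move=> Lam cardLam; set k := (s - d * t)%N.
have G_free : row_free G.
  by apply: row_free_free_rows; rewrite /free hG hdimC size_map size_enum_ord.
have GA_free (A : {set 'I_s}) : #|A| = k -> row_free (subcols L G A).
  move=> cardA; apply: row_free_subcols => // x xG_neq0.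
  rewrite cardsCs setCK cardA card_ord /k subKn ?(ltnW hsdt) // -addn1.
  by apply: hLw xG_neq0; rewrite -hG mulmx_memv_span_rows.
pose cols l := #|labelcols L [set l]|.
have cols_eq l : cols l = j.
  apply: (@const_of_subset_sums _ cols k).
  - by rewrite /k subn_gt0.
  - by rewrite card_ord /k ltn_subrL muln_gt0 hd ht hs.
  - move=> A cardA; rewrite -(card_labelcols L A).
    by have := rank_leq_col (subcols L G A); rewrite (eqP (GA_free A cardA)).
  - rewrite -(eq_bigl _ _ (@in_setT _)).
    rewrite -(card_labelcols L setT) card_ord -[RHS](card_ord (j * s)).
    by apply: eq_card => i; rewrite !inE.
have e : #|labelcols L Lam| = (j * k)%N.
  by rewrite card_labelcols (eq_bigr _ (fun l _ => cols_eq l)) sum_nat_const cardLam mulnC.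
by exists e; apply: row_free_castmx_det; apply: GA_free.
Qed.
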